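(* Let $k$ be a positive integer. For all $A,B\in R_k$ we have $\operatorname{T}_k(AB)=\operatorname{T}_k(BA)$ in $\mathbb{Z}/k\mathbb{Z}$.
   Context: $\mathbb{N}=\{1,2,3,\dots\}$. $R$ denotes the ring of all $\mathbb{N}\times\mathbb{N}$ integer matrices with only finitely many nonzero entries in each row and each column, with entrywise addition and multiplication $(AB)_{i,j}=\sum_{l\ge1}a_{i,l}b_{l,j}$. Fix a positive integer $k$. Partition $\mathbb{N}$ into consecutive blocks $J_1=\{1\}$ and, for $m\ge2$, $J_m=\{2+k(m-2),\dots,1+k(m-1)\}$. For $A\in R$, the block $A^{m,n}$ is the submatrix with rows indexed by $J_m$ and columns by $J_n$. $R_k$ is the subring of $A\in R$ such that for all but finitely many pairs $(m,n)$ with $m,n\ge2$, $A^{m,n}=cI_k$ for some integer $c$. For a finite square integer matrix $M$, $\operatorname{t}_k(M)\in\mathbb{Z}/k\mathbb{Z}$ is the residue class of the sum of its diagonal entries. For $A\in R_k$, $\operatorname{T}_k(A)=\sum_{n\ge1}\operatorname{t}_k(A^{n,n})\in\mathbb{Z}/k\mathbb{Z}$ (a finite sum, since $\operatorname{t}_k(cI_k)=0$). *)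

From HB Require Import structures.
From mathcomp Require Import all_boot all_order ssralg ssrnum ssrint intdiv matrix.
From mathcomp Require Import boolp classical_sets functions cardinality fsbigop.
Set Implicit Arguments. Unset Strict Implicit. Unset Printing Implicit Defensive.
Import Order.TTheory GRing.Theory Num.Theory.
Local Open Scope classical_set_scope.
Local Open Scope ring_scope.

(* An N x N integer matrix; the paper's index i >= 1 is stored at i - 1
   (0-based indexing). *)
Definition imat := nat -> nat -> int.

Definition inR (A : imat) : Prop :=
  (forall i, finite_set [set j | A i j != 0]) /\
  (forall j, finite_set [set i | A i j != 0]).

Definition mulM (A B : imat) : imat :=
  fun i j => \sum_(l \in [set: nat]) A i l * B l j.

(* Blocks (numbered from 1 as in the paper): J_1 = {1}, and for m >= 2,
   J_m = {2+k(m-2), ..., 1+k(m-1)}.  In 0-based indexing J_m starts at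
   bstart k m and has bsize k m elements. *)
Definition bstart (k m : nat) : nat := if (m <= 1)%N then 0%N else (1 + k * (m - 2))%N.
Definition bsize (k m : nat) : nat := if (m <= 1)%N then 1%N else k.

Definition blockM (k : nat) (A : imat) (m n : nat) : 'M[int]_(bsize k m, bsize k n) :=
  \matrix_(r < bsize k m, s < bsize k n) A (bstart k m + r)%N (bstart k n + s)%N.

Definition blockK (k : nat) (A : imat) (m n : nat) : 'M[int]_k :=
  \matrix_(r < k, s < k) A (bstart k m + r)%N (bstart k n + s)%N.

Definition inRk (k : nat) (A : imat) : Prop :=
  inR A /\
  finite_set [set mn : nat * nat | (2 <= mn.1)%N /\ (2 <= mn.2)%N /\
                 ~ (exists c : int, blockK k A mn.1 mn.2 = c%:M)].

(* t_k(M): residue class mod k of the trace, represented by its canonical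
   representative in [0, k). *)
Definition tk (k : nat) (p : nat) (M : 'M[int]_p) : int := ((\tr M) %% k)%Z.

Definition Tk (k : nat) (A : imat) : int :=
  ((\sum_(n \in [set n : nat | (1 <= n)%N]) tk k (blockM k A n n)) %% k)%Z.

From HB Require Import structures.
From mathcomp Require Import zify.
From mathcomp Require Import all_boot all_order ssralg ssrnum ssrint intdiv matrix.
From mathcomp Require Import boolp classical_sets functions cardinality fsbigop.
Set Implicit Arguments. Unset Strict Implicit. Unset Printing Implicit Defensive.
Import Order.TTheory GRing.Theory Num.Theory.
Local Open Scope classical_set_scope.
Local Open Scope ring_scope.

(* Write g(X, Y; n, m) for tr(X^{n,m} Y^{m,n}). Since rows of X are finitely
   supported, tr((XY)^{n,n}) = sum_m g(X, Y; n, m), so T_k(XY) is the sum of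
   all g(X, Y; n, m) mod k, and g(X, Y; n, m) = g(Y, X; m, n). The double sum
   is infinite, but for X, Y in R_k all far-away terms vanish mod k: off the
   finitely many exceptional blocks, both X^{n,m} and Y^{m,n} are scalar,
   giving g = k c d; the blocks meeting the first row or column vanish far
   out because that row and column are finitely supported. Truncating to a
   common finite square, T_k(XY) and T_k(YX) are the same double sum. *)

Lemma finite_set_bounded (T : choiceType) (S : set T) (f : T -> nat) :
  finite_set S -> exists L, forall x, S x -> (f x < L)%N.
Proof.
move=> /finite_fsetP [X ->]; exists (\max_(x <- finmap.enum_fset X) f x).+1.
by move=> x /= xX; rewrite ltnS; apply: (leq_bigmax_seq (P := xpredT)).
Qed.

Lemma fsbig_nat_interval (P : set nat) (f : nat -> int) a b :
  (forall i, P i -> f i != 0 -> (a <= i < b)%N) ->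
  (forall i, (a <= i < b)%N -> P i) ->
  \sum_(i \in P) f i = \sum_(a <= i < b) f i.
Proof.
move=> suppP abP; rewrite fsbig_supp /index_iota; apply: fsbig_fwiden.
- by move=> i [Pi /= fi]; rewrite mem_iota; have := suppP i Pi (introN eqP fi); lia.
- exact: iota_uniq.
- move=> i [/= + fi]; rewrite mem_iota => i_ab.
  have Pi : P i by apply: abP; lia.
  by apply: contra_notP fi.
Qed.

Lemma dvdz_sum_nat (d : int) a b (F : nat -> int) :
  (forall i, (a <= i < b)%N -> (d %| F i)%Z) -> (d %| \sum_(a <= i < b) F i)%Z.
Proof. by move=> dF; rewrite big_nat_cond; apply: rpred_sum => i /andP[/dF]. Qed.

Section Blocks.
Variable k : nat.

Lemma bstartS m : (1 <= m)%N -> bstart k m.+1 = (bstart k m + bsize k m)%N.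
Proof.
rewrite /bstart /bsize; case: m => [|[|m]] //= _; first by rewrite muln0.
by rewrite !subSS subn0; lia.
Qed.

Lemma leq_pred_bstart m : (0 < k)%N -> (m.-1 <= bstart k m)%N.
Proof. by rewrite /bstart; case: ifP => m_le1 hk; nia. Qed.

Lemma bsize_ge2 m : (2 <= m)%N -> bsize k m = k.
Proof. by rewrite /bsize; case: ifP => //; lia. Qed.

Lemma sum_prefix_blocks (h : nat -> int) M : (1 <= M)%N ->
  \sum_(0 <= l < bstart k M) h l =
  \sum_(1 <= m < M) \sum_(0 <= s < bsize k m) h (bstart k m + s)%N.
Proof.
elim: M => [|[|M] IH] // _; first by rewrite /bstart /= !big_geq.
rewrite bstartS // big_nat_recr //= -IH //.
rewrite (big_cat_nat _ (n := bstart k M.+1)) //=; last lia.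
congr (_ + _); rewrite (big_addn 0 _ (bstart k M.+1)) addKn.
by apply: eq_big_nat => i _; rewrite addnC.
Qed.

Definition block_pairing (X Y : imat) n m : int :=
  \sum_(0 <= r < bsize k n) \sum_(0 <= s < bsize k m)
     X (bstart k n + r)%N (bstart k m + s)%N * Y (bstart k m + s)%N (bstart k n + r)%N.

Lemma block_pairingC X Y n m : block_pairing Y X n m = block_pairing X Y m n.
Proof.
rewrite /block_pairing exchange_big_nat; apply: eq_big_nat => s _.
by apply: eq_big_nat => r _; rewrite mulrC.
Qed.

Lemma trace_blockM_mulM X Y n M : (1 <= M)%N ->
  (forall r l, (r < bsize k n)%N -> (bstart k M <= l)%N ->
     X (bstart k n + r)%N l = 0) ->
  \tr (blockM k (mulM X Y) n n) = \sum_(1 <= m < M) block_pairing X Y n m.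
Proof.
move=> M_gt0 X0; rewrite /mxtrace.
under eq_bigr => i _ do rewrite mxE.
rewrite -(big_mkord xpredT (fun r => mulM X Y (bstart k n + r)%N (bstart k n + r)%N)).
rewrite /block_pairing exchange_big_nat; apply: eq_big_nat => r /andP[_ r_lt].
rewrite /mulM (fsbig_nat_interval (a := 0%N) (b := bstart k M)) ?sum_prefix_blocks //.
move=> l _; apply: contraR; rewrite -leqNgt => l_ge.
by rewrite X0 // mul0r.
Qed.

Lemma block_pairing_eq0 X Y n m :
  (forall r s, (r < bsize k n)%N -> (s < bsize k m)%N ->
     X (bstart k n + r)%N (bstart k m + s)%N = 0) ->
  block_pairing X Y n m = 0.
Proof.
move=> X0; rewrite /block_pairing big_nat_cond big1 // => r /andP[/andP[_ hr] _].
by rewrite big_nat_cond big1 // => s /andP[/andP[_ hs] _]; rewrite X0 ?mul0r.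
Qed.

Lemma block_pairing_scalar X Y n m c d : (2 <= n)%N -> (2 <= m)%N ->
  blockK k X n m = c%:M -> blockK k Y m n = d%:M ->
  block_pairing X Y n m = (c * d) *+ k.
Proof.
move=> n_ge2 m_ge2 Xc Yd.
have entry (Z : imat) p q e r s : blockK k Z p q = e%:M -> (r < k)%N -> (s < k)%N ->
    Z (bstart k p + r)%N (bstart k q + s)%N = e *+ (r == s).
  by move=> Ze hr hs; have := congr1 (fun M : 'M_k => M (Ordinal hr) (Ordinal hs)) Ze;
     rewrite !mxE.
rewrite -[k in RHS]subn0 -sumr_const_nat /block_pairing !bsize_ge2 //.
apply: eq_big_nat => r /andP[_ hr].
under eq_big_nat => s /andP[_ hs].
  rewrite (entry _ _ _ _ _ _ Xc) // (entry _ _ _ _ _ _ Yd) // eq_sym.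
  by rewrite mulrnAl mulrnAr -mulrnA mulnb andbb mulrb over.
by rewrite -big_mkcond big_nat1_eq hr.
Qed.

Lemma rows_eventually0 X a c : inR X ->
  exists L, forall r l, (r < c)%N -> (L <= l)%N -> X (a + r)%N l = 0.
Proof.
move=> [rowsX _]; elim: c => [|c [L XL]]; first by exists 0%N.
have [L' XL'] := finite_set_bounded id (rowsX (a + c)%N).
exists (maxn L L') => r l; rewrite ltnS leq_eqVlt => /orP[/eqP -> | r_lt] l_ge.
  by apply/eqP; apply: contraT => /XL' /=; lia.
by apply: XL => //; lia.
Qed.

Definition far_pairings_dvd X Y N := forall n m, (1 <= n)%N -> (1 <= m)%N ->
  (N <= n)%N || (N <= m)%N -> (k %| block_pairing X Y n m)%Z.

Lemma block_pairing_far_dvd X Y : (0 < k)%N -> inRk k X -> inRk k Y ->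
  exists2 N, (1 <= N)%N & far_pairings_dvd X Y N.
Proof.
move=> hk [[rowsX colsX] badX] [_ badY].
have [LX LXP] := finite_set_bounded (fun nm : nat * nat => (nm.1 + nm.2)%N) badX.
have [LY LYP] := finite_set_bounded (fun nm : nat * nat => (nm.1 + nm.2)%N) badY.
have [L0 L0P] := finite_set_bounded id (rowsX 0%N).
have [L0' L0'P] := finite_set_bounded id (colsX 0%N).
exists (LX + LY + L0 + L0' + 2)%N; first lia.
move=> n m n_ge1 m_ge1 far.
have [n_ge2|n_le1] := ltnP 1 n; have [m_ge2|m_le1] := ltnP 1 m.
- have [[c Xc]|nXc] := pselect (exists c, blockK k X n m = c%:M); last first.
    by have := LXP (n, m) (conj n_ge2 (conj m_ge2 nXc)) => /=; lia.
  have [[d Yd]|nYd] := pselect (exists d, blockK k Y m n = d%:M); last first.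
    by have := LYP (m, n) (conj m_ge2 (conj n_ge2 nYd)) => /=; lia.
  by rewrite (block_pairing_scalar n_ge2 m_ge2 Xc Yd) -mulr_natr dvdz_mull // natz.
- have -> : m = 1%N by lia.
  rewrite block_pairing_eq0 ?dvdz0 // => r s _; rewrite /bsize /= ltnS leqn0 => /eqP->.
  have := leq_pred_bstart n hk => n_le.
  by apply/eqP; apply: contraT => /L0'P /=; lia.
- have -> : n = 1%N by lia.
  rewrite block_pairing_eq0 ?dvdz0 // => r s; rewrite /bsize /= ltnS leqn0 => /eqP-> _.
  have := leq_pred_bstart m hk => m_le.
  by apply/eqP; apply: contraT => /L0P /=; lia.
- by lia.
Qed.

Section Truncation.
Variables (X Y : imat) (N : nat).
Hypotheses (hk : (0 < k)%N) (rX : inR X) (N_gt0 : (1 <= N)%N).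
Hypothesis farXY : far_pairings_dvd X Y N.

Lemma trace_blockM_mulM_truncated n : (1 <= n)%N ->
  (k %| \tr (blockM k (mulM X Y) n n) - \sum_(1 <= m < N) block_pairing X Y n m)%Z.
Proof.
move=> n_ge1; have [L XL] := rows_eventually0 (bstart k n) (bsize k n) rX.
rewrite (@trace_blockM_mulM X Y n (maxn L.+1 N)); last 2 first.
- by rewrite leq_max N_gt0 orbT.
- move=> r l r_lt l_ge; apply: XL => //.
  by have := leq_pred_bstart (maxn L.+1 N) hk; lia.
rewrite (big_cat_nat _ (n := N)) ?leq_maxr //= addrC addrK.
by apply: dvdz_sum_nat => m /andP[m_ge _]; apply: farXY => //; [lia | rewrite m_ge orbT].
Qed.

Lemma Tk_mulM_truncated :
  Tk k (mulM X Y) =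
  ((\sum_(1 <= n < N) \sum_(1 <= m < N) block_pairing X Y n m) %% k)%Z.
Proof.
pose x n := \tr (blockM k (mulM X Y) n n).
rewrite /Tk (fsbig_nat_interval (a := 1%N) (b := N)); last first.
- by move=> i /andP[].
- move=> n /= n_ge1; apply: contraR; rewrite n_ge1 /= -leqNgt => n_ge.
  apply/eqP/dvdz_mod0P; rewrite -/(x n).
  rewrite -[x n](subrK (\sum_(1 <= m < N) block_pairing X Y n m)).
  rewrite rpredD ?trace_blockM_mulM_truncated //.
  by apply: dvdz_sum_nat => m /andP[m_ge1 _]; apply: farXY; rewrite ?n_ge.
apply/eqP; rewrite eqz_mod_dvd -sumrB; apply: dvdz_sum_nat => n /andP[n_ge1 _].
rewrite /tk -/(x n); set S := \sum_(1 <= m < N) _.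
have -> : (x n %% k)%Z - S = ((x n %% k)%Z - x n) + (x n - S) by rewrite addrA addrNK.
by rewrite rpredD ?trace_blockM_mulM_truncated // -eqz_mod_dvd modz_mod.
Qed.
End Truncation.
End Blocks.

Theorem mainTheorem6 (k : nat) (hk : (0 < k)%N) (A B : imat) :
  inRk k A -> inRk k B -> Tk k (mulM A B) = Tk k (mulM B A).
Proof.
move=> Ak Bk; have [N N_gt0 farAB] := block_pairing_far_dvd hk Ak Bk.
have farBA : far_pairings_dvd k B A N.
  by move=> n m n_ge1 m_ge1 far; rewrite block_pairingC farAB // orbC.
rewrite (Tk_mulM_truncated hk Ak.1 N_gt0 farAB) (Tk_mulM_truncated hk Bk.1 N_gt0 farBA).
congr (_ %% _)%Z; rewrite exchange_big_nat.
by apply: eq_big_nat => n _; apply: eq_big_nat => m _; rewrite block_pairingC.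
Qed.
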